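(* Let $\sigma_1,\sigma_2>0$, $\beta\in(0,1)$. Suppose $k:\mathbb{S}^1\times[0,T)\to\mathbb{R}$ satisfies: $k\in C^{2+\beta,1+\beta}(\mathbb{S}^1\times[0,T-\varepsilon])$ for all $\varepsilon>0$; $k_t=\sigma_1k^2k_{\theta\theta}+\sigma_1k^3+\sigma_2k^2$; $k(\cdot,0)=\psi\in C^{1+\beta}(\mathbb{S}^1)$ strictly positive with $\int_0^{2\pi}\frac{\cos\theta}{\psi}d\theta=\int_0^{2\pi}\frac{\sin\theta}{\psi}d\theta=0$; and $k(\theta,0)>k_0>0$. Suppose that for all $t\in[0,T)$, $$\int_0^{2\pi}\log k(\theta,t)\,d\theta\le C_1.$$ Then for all $t\in[0,T)$, $$k_{\max}(t)\le 2e^{4(C_1+2\pi|\log k_0|)\left(\sqrt{2\pi}+\sigma_2\sqrt{\frac{\pi T}{\sigma_1}}\right)^2}+\left(\sqrt{2\pi}+\sigma_2\sqrt{\frac{\pi T}{\sigma_1}}\right)^{-1}\sqrt{\int_0^{2\pi}k_\theta^2-k^2\,d\theta\Big|_{t=0}}.$$ In particular $k$ is uniformly bounded on $\mathbb{S}^1\times[0,T)$.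
   Context: $\theta\in[0,2\pi)$ is the tangent angle parameter of the associated family of convex closed curves moving by $\partial_t\gamma=(\sigma_1k+\sigma_2)\nu$, and $k_{\max}(t)=\max_\theta k(\theta,t)$. *)

From Stdlib Require Import Reals Lra.
From Coquelicot Require Import Coquelicot.
Open Scope R_scope.

(* A function on S^1 x [0,T) is represented as k : R -> R -> R (theta, t),
   2*PI-periodic in theta. *)

Definition d_th (k : R -> R -> R) (th t : R) : R := Derive (fun x => k x t) th.
Definition d_t (k : R -> R -> R) (th t : R) : R := Derive (fun s => k th s) t.

(* x^beta for x >= 0 (Stdlib's Rpower 0 b = 1, so treat 0 separately) *)
Definition hpow (x b : R) : R := if Rle_dec x 0 then 0 else Rpower x b.

Definition holder_on (beta M : R) (I : R -> Prop) (f : R -> R -> R) : Prop :=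
  (forall th t, I t -> Rabs (f th t) <= M) /\
  (forall th t th' t', I t -> I t' ->
     Rabs (f th t - f th' t') <= M * (hpow (Rabs (th - th')) beta
                                      + hpow (Rabs (t - t')) beta)).

(* k in C^{2+beta,1+beta}(S^1 x [0,tau]): k is twice differentiable in theta,
   differentiable in t (for t in (0,tau]; the derivative extends to t=0 by the
   Hoelder bound), and k, k_theta, k_thetatheta, k_t are bounded and
   beta-Hoelder on S^1 x [0,tau] (resp. S^1 x (0,tau] for k_t). *)
Definition C2b1b (beta tau : R) (k : R -> R -> R) : Prop :=
  (forall th t, 0 <= t <= tau ->
     ex_derive (fun x => k x t) th /\ ex_derive (fun x => d_th k x t) th) /\
  (forall th t, 0 < t <= tau -> ex_derive (fun s => k th s) t) /\
  exists M : R,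
    holder_on beta M (fun t => 0 <= t <= tau) k /\
    holder_on beta M (fun t => 0 <= t <= tau) (d_th k) /\
    holder_on beta M (fun t => 0 <= t <= tau) (d_th (d_th k)) /\
    holder_on beta M (fun t => 0 < t <= tau) (d_t k).

Definition C1b (beta : R) (psi : R -> R) : Prop :=
  (forall th, psi (th + 2 * PI) = psi th) /\
  (forall th, ex_derive psi th) /\
  exists M : R,
    (forall th, Rabs (psi th) <= M) /\
    (forall th, Rabs (Derive psi th) <= M) /\
    (forall th th', Rabs (Derive psi th - Derive psi th')
                    <= M * hpow (Rabs (th - th')) beta).

From Stdlib Require Import Reals Lra Lia ZArith Classical IndefiniteDescription.
From Coquelicot Require Import Coquelicot.
Open Scope R_scope.

(* Work on [S^1 x [0, tau]] for [tau < T], where the Hoelder bounds are uniform.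
   A first-touching argument with the equation keeps [k > k0], so [log k] makes
   sense.  The energy [E(t) = ∫ k_th^2 - k^2] satisfies
   [E' = -2 ∫ k_t (k_thth + k) <= pi sigma2^2 K^2 / sigma1] by completing the
   square, where [K] bounds [k].  Let [K = k(x1, s)] be the maximum of [k] over
   [S^1 x [0, t]].  Since [∫ log k <= C1], the set where [k] exceeds
   [M = exp(4 (C1 + 2 pi |log k0|) A^2)] contains no arc longer than [1/(4A^2)],
   so by Cauchy-Schwarz [(K - M)^2 <= ∫ k_th^2 / (4A^2) <= (E(0) + A^2 K^2) / (4A^2)],
   that is [K <= 2M + sqrt(E(0)) / A]. *)

(** * Hoelder moduli *)

Lemma hpow_ge0 x b : 0 <= hpow x b.
Proof. unfold hpow; destruct (Rle_dec x 0); [lra | left; apply exp_pos]. Qed.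

Lemma hpow_0 b : hpow 0 b = 0.
Proof. unfold hpow; destruct (Rle_dec 0 0); lra. Qed.

Lemma hpow_le x y b : 0 < b -> 0 <= x <= y -> hpow x b <= hpow y b.
Proof.
  intros Hb Hxy; unfold hpow.
  destruct (Rle_dec x 0), (Rle_dec y 0); try lra.
  - left; apply exp_pos.
  - destruct (Req_dec x y) as [<- | Hne]; [lra |].
    left; apply Rlt_Rpower_l; lra.
Qed.

Lemma holder_modulus_small C b eps : 0 < b -> 0 < eps ->
  exists delta, 0 < delta /\ forall h, Rabs h < delta -> C * hpow (Rabs h) b < eps.
Proof.
  intros Hb He.
  set (C' := Rabs C + 1).
  assert (HC' : 0 < C') by (unfold C'; pose proof (Rabs_pos C); lra).
  assert (HeC : 0 < eps / C') by (apply Rdiv_lt_0_compat; lra).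
  exists (Rpower (eps / C') (/ b)); split; [apply exp_pos |].
  intros h Hh.
  assert (Hhb : hpow (Rabs h) b < eps / C').
  { unfold hpow; destruct (Rle_dec (Rabs h) 0); [lra |].
    replace (eps / C') with (Rpower (Rpower (eps / C') (/ b)) b)
      by (rewrite Rpower_mult, Rinv_l, Rpower_1; lra).
    apply Rlt_Rpower_l; lra. }
  pose proof (hpow_ge0 (Rabs h) b); pose proof (Rle_abs C).
  apply Rle_lt_trans with (C' * hpow (Rabs h) b); [unfold C'; nra |].
  apply Rmult_lt_compat_l with (r := C') in Hhb; [| lra].
  replace (C' * (eps / C')) with eps in Hhb by (field; lra); exact Hhb.
Qed.

Lemma continuity_pt_of_holder (f : R -> R) x C b : 0 < b ->
  (forall y, Rabs (f y - f x) <= C * hpow (Rabs (y - x)) b) -> continuity_pt f x.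
Proof.
  intros Hb Hf eps He.
  destruct (holder_modulus_small C b eps Hb He) as [delta [Hd Hsmall]].
  exists delta; split; [exact Hd |].
  intros y [_ Hy]; cbn in *; unfold R_dist in *.
  eapply Rle_lt_trans; [apply Hf | apply Hsmall, Hy].
Qed.

Lemma holder_on_bound beta M (I : R -> Prop) f x t :
  holder_on beta M I f -> I t -> Rabs (f x t) <= M.
Proof. intros [Hbd _] It; exact (Hbd x t It). Qed.

Lemma holder_on_space beta M (I : R -> Prop) f x y t :
  holder_on beta M I f -> I t -> Rabs (f y t - f x t) <= M * hpow (Rabs (y - x)) beta.
Proof.
  intros [_ Hh] It; specialize (Hh y t x t It It).
  rewrite Rminus_diag, Rabs_R0, hpow_0, Rplus_0_r in Hh; exact Hh.
Qed.

Lemma holder_on_time beta M (I : R -> Prop) f x s t :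
  holder_on beta M I f -> I s -> I t -> Rabs (f x s - f x t) <= M * hpow (Rabs (s - t)) beta.
Proof.
  intros [_ Hh] Is It; specialize (Hh x s x t Is It).
  rewrite Rminus_diag, Rabs_R0, hpow_0, Rplus_0_l in Hh; exact Hh.
Qed.

Lemma holder_on_continuity_space beta M (I : R -> Prop) f x t : 0 < beta ->
  holder_on beta M I f -> I t -> continuity_pt (fun y => f y t) x.
Proof.
  intros Hb Hf It; apply (continuity_pt_of_holder _ x M beta Hb).
  intros y; exact (holder_on_space beta M I f x y t Hf It).
Qed.

Lemma holder_on_nonneg beta M (I : R -> Prop) (f : R -> R -> R) (x t : R) :
  holder_on beta M I f -> I t -> 0 <= M.
Proof.
  intros Hf It; pose proof (holder_on_bound beta M I f x t Hf It).
  pose proof (Rabs_pos (f x t)); lra.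
Qed.

Definition clamp (a b s : R) : R := Rmax a (Rmin s b).

Lemma clamp_in a b s : a <= b -> a <= clamp a b s <= b.
Proof. intros; unfold clamp, Rmax, Rmin; repeat destruct Rle_dec; lra. Qed.

Lemma clamp_id a b s : a <= s <= b -> clamp a b s = s.
Proof. intros; unfold clamp, Rmax, Rmin; repeat destruct Rle_dec; lra. Qed.

Lemma clamp_dist a b s r : a <= b -> Rabs (clamp a b s - clamp a b r) <= Rabs (s - r).
Proof.
  intros; unfold clamp, Rmax, Rmin; repeat destruct Rle_dec;
    unfold Rabs; repeat destruct Rcase_abs; lra.
Qed.

Definition holder_interval (C beta a b : R) (f : R -> R) : Prop :=
  forall s t, a <= s <= b -> a <= t <= b -> Rabs (f s - f t) <= C * hpow (Rabs (s - t)) beta.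

Lemma holder_interval_clamp_continuity C beta a b f : 0 < beta -> a <= b ->
  holder_interval C beta a b f -> forall s, continuity_pt (fun r => f (clamp a b r)) s.
Proof.
  intros Hb Hab Hf s; apply (continuity_pt_of_holder _ s (Rabs C) beta Hb); intros r.
  eapply Rle_trans; [apply Hf; apply clamp_in, Hab |].
  pose proof (Rle_abs C); pose proof (hpow_ge0 (Rabs (clamp a b r - clamp a b s)) beta).
  apply Rle_trans with (Rabs C * hpow (Rabs (clamp a b r - clamp a b s)) beta); [nra |].
  apply Rmult_le_compat_l; [apply Rabs_pos |].
  apply hpow_le; [exact Hb | split; [apply Rabs_pos | apply clamp_dist, Hab]].
Qed.

Lemma holder_interval_attains_max C beta a b f : 0 < beta -> a <= b ->
  holder_interval C beta a b f -> exists m, a <= m <= b /\ forall s, a <= s <= b -> f s <= f m.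
Proof.
  intros Hb Hab Hf.
  destruct (continuity_ab_maj (fun r => f (clamp a b r)) a b Hab) as [m [Hm Hmab]].
  { intros; apply (holder_interval_clamp_continuity C beta); assumption. }
  exists m; split; [exact Hmab |]; intros s Hs.
  specialize (Hm s Hs); rewrite !clamp_id in Hm by assumption; exact Hm.
Qed.

(* [Rmin (df x) c] agrees with [df] inside [(a, b)] and keeps the mean-value point's
   derivative below [c] even when that point is an endpoint. *)
Lemma holder_interval_derive_le C beta a b f df c : 0 < beta -> a < b ->
  holder_interval C beta a b f ->
  (forall x, a < x < b -> is_derive f x (df x)) -> (forall x, a < x < b -> df x <= c) ->
  f b <= f a + c * (b - a).
Proof.
  intros Hb Hab Hf Hdf Hc.
  destruct (MVT_gen (fun r => f (clamp a b r)) a b (fun x => Rmin (df x) c)) as [xi [_ Hmvt]].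
  - rewrite Rmin_left, Rmax_right by lra; intros x Hx.
    rewrite Rmin_left by (apply Hc, Hx).
    apply is_derive_ext_loc with f; [| exact (Hdf x Hx)].
    assert (Hp : 0 < Rmin (x - a) (b - x)) by (apply Rmin_pos; lra).
    exists (mkposreal _ Hp); intros y Hy.
    cbn in Hy; unfold AbsRing_ball, abs, minus, plus, opp in Hy; cbn in Hy.
    apply Rabs_lt_between in Hy.
    pose proof (Rmin_l (x - a) (b - x)); pose proof (Rmin_r (x - a) (b - x)).
    rewrite clamp_id; [reflexivity | lra].
  - intros; apply (holder_interval_clamp_continuity C beta); [exact Hb | lra | exact Hf].
  - rewrite !clamp_id in Hmvt by lra.
    pose proof (Rmin_r (df xi) c).
    assert (Rmin (df xi) c * (b - a) <= c * (b - a)) by (apply Rmult_le_compat_r; lra).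
    lra.
Qed.

Lemma two_PI_pos : 0 < 2 * PI.
Proof. pose proof PI_RGT_0; lra. Qed.

(** * Continuity and integrals *)

Lemma continuity_pt_plus_fun (f g : R -> R) x :
  continuity_pt f x -> continuity_pt g x -> continuity_pt (fun y => f y + g y) x.
Proof. exact (continuity_pt_plus f g x). Qed.

Lemma continuity_pt_minus_fun (f g : R -> R) x :
  continuity_pt f x -> continuity_pt g x -> continuity_pt (fun y => f y - g y) x.
Proof. exact (continuity_pt_minus f g x). Qed.

Lemma continuity_pt_mult_fun (f g : R -> R) x :
  continuity_pt f x -> continuity_pt g x -> continuity_pt (fun y => f y * g y) x.
Proof. exact (continuity_pt_mult f g x). Qed.

Lemma continuity_pt_sqr_fun (f : R -> R) x :
  continuity_pt f x -> continuity_pt (fun y => f y ^ 2) x.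
Proof.
  intros Hf; apply (continuity_pt_ext (fun y => f y * f y)); [intros; ring |].
  apply continuity_pt_mult_fun; exact Hf.
Qed.

Lemma continuity_pt_const_fun c x : continuity_pt (fun _ => c) x.
Proof. apply continuity_pt_const; intros a b; reflexivity. Qed.

Lemma is_derive_continuity_pt (f : R -> R) x l : is_derive f x l -> continuity_pt f x.
Proof.
  intros Hf; apply continuity_pt_filterlim, (ex_derive_continuous f x); exists l; exact Hf.
Qed.

#[local] Hint Resolve continuity_pt_plus_fun continuity_pt_minus_fun continuity_pt_mult_fun
  continuity_pt_sqr_fun continuity_pt_const_fun : continuity.
#[local] Hint Extern 1 (_ <= _ <= _) => lra : continuity.
#[local] Hint Extern 1 (_ < _ <= _) => lra : continuity.

Lemma ex_RInt_continuity (f : R -> R) a b : (forall x, continuity_pt f x) -> ex_RInt f a b.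
Proof.
  intros Hf; apply (@ex_RInt_continuous R_CompleteNormedModule).
  intros x _; apply continuity_pt_filterlim, Hf.
Qed.

(* Coquelicot states these with the module operations [plus], [scal], which
   [rewrite] does not match against [Rplus], [Rmult]. *)
Lemma RInt_plus_R (f g : R -> R) a b : ex_RInt f a b -> ex_RInt g a b ->
  RInt (fun x => f x + g x) a b = RInt f a b + RInt g a b.
Proof. exact (RInt_plus f g a b). Qed.

Lemma RInt_minus_R (f g : R -> R) a b : ex_RInt f a b -> ex_RInt g a b ->
  RInt (fun x => f x - g x) a b = RInt f a b - RInt g a b.
Proof. exact (RInt_minus f g a b). Qed.

Lemma RInt_scal_R (f : R -> R) a b c : ex_RInt f a b ->
  RInt (fun x => c * f x) a b = c * RInt f a b.
Proof. exact (RInt_scal f a b c). Qed.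

Lemma RInt_const_R a b c : RInt (fun _ => c) a b = (b - a) * c.
Proof. exact (RInt_const a b c). Qed.

Lemma RInt_ext_R (f g : R -> R) a b : (forall x, Rmin a b < x < Rmax a b -> f x = g x) ->
  RInt f a b = RInt g a b.
Proof. exact (RInt_ext f g a b). Qed.

Lemma RInt_Chasles_R (f : R -> R) a b c : ex_RInt f a b -> ex_RInt f b c ->
  RInt f a b + RInt f b c = RInt f a c.
Proof. exact (RInt_Chasles f a b c). Qed.

Lemma RInt_ge_const (f : R -> R) a b m : a <= b -> ex_RInt f a b ->
  (forall x, a < x < b -> m <= f x) -> (b - a) * m <= RInt f a b.
Proof.
  intros Hab Hf Hm; rewrite <- RInt_const_R.
  apply RInt_le; [exact Hab | apply ex_RInt_const | exact Hf | exact Hm].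
Qed.

Lemma RInt_shift_period (f : R -> R) P c : (forall x, continuity_pt f x) ->
  (forall x, f (x + P) = f x) -> RInt f (c - P) c = RInt f 0 P.
Proof.
  intros Hf HP.
  assert (Hshift : RInt f (c - P) 0 = RInt f c P).
  { assert (H := RInt_comp_lin f 1 P (c - P) 0 (ex_RInt_continuity _ _ _ Hf)).
    replace (1 * (c - P) + P) with c in H by ring; replace (1 * 0 + P) with P in H by ring.
    rewrite <- H; apply RInt_ext_R; intros x _.
    unfold scal; cbn; unfold mult; cbn; rewrite !Rmult_1_l, HP; reflexivity. }
  rewrite <- (RInt_Chasles_R f (c - P) 0 c), Hshift, Rplus_comm, RInt_Chasles_R;
    try apply ex_RInt_continuity; auto.
Qed.

Lemma RInt_le_period (f : R -> R) P a b : (forall x, continuity_pt f x) ->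
  (forall x, f (x + P) = f x) -> (forall x, 0 <= f x) -> b - P <= a <= b ->
  RInt f a b <= RInt f 0 P.
Proof.
  intros Hf HP Hpos Hab.
  rewrite <- (RInt_shift_period f P b Hf HP), <- (RInt_Chasles_R f (b - P) a b)
    by (apply ex_RInt_continuity; exact Hf).
  assert (0 <= RInt f (b - P) a); [| lra].
  apply RInt_ge_0; [lra | apply ex_RInt_continuity, Hf | intros; apply Hpos].
Qed.

(* Cauchy-Schwarz, from [0 <= RInt ((b - a) g - RInt g)^2]. *)
Lemma RInt_sqr_le (g : R -> R) a b : a < b -> (forall x, continuity_pt g x) ->
  RInt g a b ^ 2 <= (b - a) * RInt (fun x => g x ^ 2) a b.
Proof.
  intros Hab Hg.
  set (I := RInt g a b); set (J := RInt (fun x => g x ^ 2) a b).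
  assert (Hsq : 0 <= RInt (fun x => ((b - a) * g x - I) ^ 2) a b).
  { apply RInt_ge_0; [lra | apply ex_RInt_continuity; auto 20 with continuity |].
    intros; apply pow2_ge_0. }
  rewrite (RInt_ext_R _ (fun x => ((b - a) ^ 2 * g x ^ 2 + (-2 * (b - a) * I) * g x) + I ^ 2))
    in Hsq by (intros; ring).
  rewrite RInt_plus_R, RInt_plus_R, !RInt_scal_R, RInt_const_R in Hsq;
    try apply ex_RInt_continuity; auto 20 with continuity.
  fold I J in Hsq.
  replace ((b - a) ^ 2 * J + -2 * (b - a) * I * I + (b - a) * I ^ 2)
    with ((b - a) * ((b - a) * J - I ^ 2)) in Hsq by ring.
  assert (0 <= (b - a) * J - I ^ 2) by (apply Rmult_le_reg_l with (b - a); [lra | nra]).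
  lra.
Qed.

Lemma sqr_increment_le (g dg : R -> R) a b : a < b ->
  (forall x, is_derive g x (dg x)) -> (forall x, continuity_pt dg x) ->
  (g b - g a) ^ 2 <= (b - a) * RInt (fun x => dg x ^ 2) a b.
Proof.
  intros Hab Hg Hdg.
  replace (g b - g a) with (RInt dg a b); [apply RInt_sqr_le; assumption |].
  apply (@is_RInt_unique R_CompleteNormedModule), (is_RInt_derive g dg);
    intros x _; [apply Hg | apply continuity_pt_filterlim, Hdg].
Qed.

Lemma RInt_parts_periodic (f df g dg d2g : R -> R) P :
  (forall x, is_derive f x (df x)) -> (forall x, is_derive g x (dg x)) ->
  (forall x, is_derive dg x (d2g x)) ->
  (forall x, continuity_pt df x) -> (forall x, continuity_pt d2g x) ->
  f P = f 0 -> dg P = dg 0 ->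
  RInt (fun x => df x * dg x) 0 P = - RInt (fun x => f x * d2g x) 0 P.
Proof.
  intros Hf Hg Hdg Cdf Cd2g Pf Pdg.
  assert (Cf : forall x, continuity_pt f x) by (intros; eapply is_derive_continuity_pt; eauto).
  assert (Cdg : forall x, continuity_pt dg x) by (intros; eapply is_derive_continuity_pt; eauto).
  assert (HI : is_RInt (fun x => df x * dg x + f x * d2g x) 0 P
                 (minus (f P * dg P) (f 0 * dg 0))).
  { apply (is_RInt_derive (fun x => f x * dg x)).
    - intros x _; apply (is_derive_mult f dg x (df x) (d2g x) (Hf x) (Hdg x)).
      intros; apply Rmult_comm.
    - intros x _; apply continuity_pt_filterlim; auto 20 with continuity. }
  apply (@is_RInt_unique R_CompleteNormedModule) in HI.
  rewrite RInt_plus_R in HI by (apply ex_RInt_continuity; auto 20 with continuity).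
  rewrite Pf, Pdg, minus_eq_zero in HI.
  change (RInt (fun x => df x * dg x) 0 P + RInt (fun x => f x * d2g x) 0 P = 0) in HI; lra.
Qed.

(** * Calculus on the real line *)

Lemma is_derive_eq0_at_min (f : R -> R) x d :
  is_derive f x d -> (forall y, f x <= f y) -> d = 0.
Proof.
  intros Hd Hmin.
  assert (pr : derivable_pt f x) by (exists d; apply is_derive_Reals, Hd).
  rewrite <- (derive_pt_eq_0 f x d pr) by (apply is_derive_Reals, Hd).
  apply (deriv_minimum f (x - 1) (x + 1)); [lra | lra | intros; apply Hmin].
Qed.

Lemma is_derive_le0_at_left_min (f : R -> R) t l delta : is_derive f t l -> 0 < delta ->
  (forall r, t - delta < r < t -> f t <= f r) -> l <= 0.
Proof.
  intros Hl Hdelta Hmin; apply is_derive_Reals in Hl.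
  destruct (Rle_or_lt l 0) as [| Hpos]; [assumption | exfalso].
  destruct (Hl (l / 2)) as [d Hd]; [lra |].
  assert (Hm : 0 < Rmin delta d) by (apply Rmin_pos; [lra | apply cond_pos]).
  pose proof (Rmin_l delta d); pose proof (Rmin_r delta d).
  set (h := - (Rmin delta d / 2)).
  assert (Hq := Hd h ltac:(unfold h; lra)
    ltac:(unfold h; rewrite Rabs_Ropp, Rabs_pos_eq; lra)).
  apply Rabs_lt_between in Hq.
  assert (f t <= f (t + h)) by (apply Hmin; unfold h; lra).
  assert ((f (t + h) - f t) / h <= 0); [| lra].
  unfold Rdiv; assert (/ h < 0) by (apply Rinv_lt_0_compat; unfold h; lra); nra.
Qed.

(* If [df] were negative at the right of the minimum point, [f] would be flat there,
   making each such point a minimum as well, with zero derivative. *)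
Lemma second_derive_ge0_at_min (f df : R -> R) x c :
  (forall y, is_derive f y (df y)) -> is_derive df x c -> (forall y, f x <= f y) -> 0 <= c.
Proof.
  intros Hf Hdf Hmin.
  destruct (Rle_or_lt 0 c) as [| Hc]; [assumption | exfalso].
  assert (Hdx : df x = 0) by exact (is_derive_eq0_at_min f x _ (Hf x) Hmin).
  apply is_derive_Reals in Hdf.
  destruct (Hdf (- c / 2)) as [delta Hdelta]; [lra |].
  pose proof (cond_pos delta) as Hd.
  assert (Hneg : forall h, 0 < h < delta -> df (x + h) < 0).
  { intros h Hh.
    assert (Hq := Hdelta h ltac:(lra) ltac:(rewrite Rabs_pos_eq; lra)).
    rewrite Hdx, Rminus_0_r in Hq; apply Rabs_lt_between in Hq.
    destruct (Rle_or_lt 0 (df (x + h))); [exfalso | assumption].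
    assert (0 <= df (x + h) / h) by (apply Rdiv_le_0_compat; lra); lra. }
  set (h := delta / 2).
  destruct (MVT_gen f x (x + h) df) as [xi [Hxi Hmvt]];
    [intros; apply Hf | intros; eapply is_derive_continuity_pt, Hf |].
  rewrite Rmin_left, Rmax_right in Hxi by (unfold h; lra).
  assert (Hdxi : df xi <= 0).
  { destruct (Req_dec xi x) as [-> | Hne]; [lra |].
    replace xi with (x + (xi - x)) by ring; left; apply Hneg; unfold h in *; lra. }
  assert (Hflat : f (x + h) = f x).
  { pose proof (Hmin (x + h)); assert (df xi * (x + h - x) <= 0); [| lra].
    replace (x + h - x) with h by ring; unfold h; nra. }
  assert (df (x + h) = 0).
  { apply (is_derive_eq0_at_min f (x + h)); [apply Hf | intros y; rewrite Hflat; apply Hmin]. }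
  pose proof (Hneg h ltac:(unfold h; lra)); lra.
Qed.

Lemma periodic_nat (f : R -> R) P : (forall x, f (x + P) = f x) ->
  forall n x, f (x + INR n * P) = f x.
Proof.
  intros Hf n; induction n as [| n IH]; intros x.
  - cbn; rewrite Rmult_0_l, Rplus_0_r; reflexivity.
  - rewrite S_INR, <- (IH x), <- (Hf (x + INR n * P)); f_equal; ring.
Qed.

Lemma periodic_int (f : R -> R) P : (forall x, f (x + P) = f x) ->
  forall z x, f (x + IZR z * P) = f x.
Proof.
  intros Hf z x; destruct (Z_le_gt_dec 0 z) as [Hz | Hz].
  - rewrite <- (Z2Nat.id z Hz), <- INR_IZR_INZ; apply periodic_nat, Hf.
  - rewrite <- (periodic_nat f P Hf (Z.to_nat (- z)) (x + IZR z * P)); f_equal.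
    rewrite INR_IZR_INZ, Z2Nat.id, opp_IZR by lia; ring.
Qed.

Lemma periodic_reduce (f : R -> R) P : 0 < P -> (forall x, f (x + P) = f x) ->
  forall x, exists y, 0 <= y <= P /\ f x = f y.
Proof.
  intros HP Hf x.
  destruct (base_Int_part (x / P)) as [Hn1 Hn2].
  set (n := Int_part (x / P)) in *.
  exists (x + IZR (- n) * P); split.
  - rewrite opp_IZR.
    assert (IZR n * P <= x / P * P) by (apply Rmult_le_compat_r; lra).
    assert ((x / P - 1) * P <= IZR n * P) by (apply Rmult_le_compat_r; lra).
    replace (x / P * P) with x in * by (field; lra).
    replace ((x / P - 1) * P) with (x - P) in * by (field; lra).
    lra.
  - symmetry; apply periodic_int, Hf.
Qed.

Lemma periodic_argmax (f : R -> R) P : 0 < P -> (forall x, f (x + P) = f x) ->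
  (forall x, continuity_pt f x) -> exists xm, forall y, f y <= f xm.
Proof.
  intros HP Hf Hc.
  destruct (continuity_ab_maj f 0 P) as [xm [Hxm _]]; [lra | intros; apply Hc |].
  exists xm; intros y; destruct (periodic_reduce f P HP Hf y) as [z [Hz ->]]; apply Hxm, Hz.
Qed.

Lemma periodic_argmin (f : R -> R) P : 0 < P -> (forall x, f (x + P) = f x) ->
  (forall x, continuity_pt f x) -> exists xm, forall y, f xm <= f y.
Proof.
  intros HP Hf Hc.
  destruct (continuity_ab_min f 0 P) as [xm [Hxm _]]; [lra | intros; apply Hc |].
  exists xm; intros y; destruct (periodic_reduce f P HP Hf y) as [z [Hz ->]]; apply Hxm, Hz.
Qed.

Lemma Derive_periodic (f : R -> R) P x : (forall y, f (y + P) = f y) ->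
  Derive f (x + P) = Derive f x.
Proof.
  intros Hf; unfold Derive; f_equal; apply Lim_ext; intros h.
  replace (x + P + h) with (x + h + P) by ring; rewrite !Hf; reflexivity.
Qed.

Lemma real_induction (P : R -> Prop) a b : a <= b ->
  (forall s, a <= s <= b -> (forall r, a <= r < s -> P r) -> P s) ->
  (forall s, a <= s < b -> (forall r, a <= r <= s -> P r) ->
     exists delta, 0 < delta /\ forall r, s < r < s + delta -> P r) ->
  forall s, a <= s <= b -> P s.
Proof.
  intros Hab Hclosed Hopen.
  set (S := fun s => a <= s <= b /\ forall r, a <= r <= s -> P r).
  assert (HSa : S a).
  { split; [lra |]; intros r Hr; replace r with a by lra.
    apply Hclosed; [lra | intros; lra]. }
  destruct (completeness S) as [m [Hub Hlub]];
    [exists b; intros s [Hs _]; lra | exists a; exact HSa |].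
  assert (Hm : a <= m <= b) by (split; [apply Hub, HSa | apply Hlub; intros s [Hs _]; lra]).
  assert (Hbelow : forall r, a <= r < m -> P r).
  { intros r Hr; destruct (classic (exists s, S s /\ r < s)) as [[s [[_ Hs] Hrs]] | Hno].
    - apply Hs; lra.
    - exfalso; assert (m <= r); [| lra].
      apply Hlub; intros s HSs; destruct (Rle_or_lt s r); [assumption |].
      exfalso; apply Hno; exists s; split; assumption. }
  assert (Hupto : forall r, a <= r <= m -> P r).
  { intros r Hr; destruct (Rlt_or_le r m); [apply Hbelow; lra |].
    replace r with m by lra; apply Hclosed; [lra | exact Hbelow]. }
  destruct (Rle_lt_or_eq_dec m b (proj2 Hm)) as [Hlt | <-]; [exfalso | exact Hupto].
  destruct (Hopen m ltac:(lra) Hupto) as [delta [Hd Hstep]].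
  set (s' := m + Rmin delta (b - m) / 2).
  assert (Hmin : 0 < Rmin delta (b - m)) by (apply Rmin_pos; lra).
  pose proof (Rmin_l delta (b - m)); pose proof (Rmin_r delta (b - m)).
  assert (HSs' : S s').
  { split; [unfold s'; lra |]; intros r Hr.
    destruct (Rle_or_lt r m); [apply Hupto; lra | apply Hstep; unfold s' in Hr; lra]. }
  pose proof (Hub s' HSs'); unfold s' in *; lra.
Qed.

(* [f > L] on a whole period would give an integral above [P L > B]; so take the
   last [a] before [x1] with [f a <= L]: the arc [(a, x1)] costs [(x1 - a) L]. *)
Lemma periodic_superlevel_arc (f : R -> R) P B L x1 : 0 < P ->
  (forall x, continuity_pt f x) -> (forall x, f (x + P) = f x) -> (forall x, 0 <= f x) ->
  RInt f 0 P <= B -> B < P * L -> L < f x1 ->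
  exists a, x1 - P <= a < x1 /\ f a <= L /\ (x1 - a) * L <= B.
Proof.
  intros HP Hc Hper Hpos HB HBL Hx1.
  set (S := fun y => x1 - P <= y <= x1 /\ f y <= L).
  assert (Sne : exists y, S y).
  { apply NNPP; intros Hno.
    assert (P * L <= RInt f (x1 - P) x1); [| rewrite RInt_shift_period in *; auto; lra].
    replace P with (x1 - (x1 - P)) at 1 by ring.
    apply RInt_ge_const; [lra | apply ex_RInt_continuity, Hc |].
    intros y Hy; destruct (Rle_or_lt (f y) L); [exfalso; apply Hno; exists y | left]; auto.
    split; [lra | assumption]. }
  destruct (completeness S) as [a [Hub Hlub]]; [exists x1; intros y [Hy _]; lra | exact Sne |].
  assert (Ha : x1 - P <= a <= x1).
  { destruct Sne as [y Hy]; pose proof (Hub y Hy); destruct Hy.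
    split; [lra | apply Hlub; intros z [Hz _]; lra]. }
  assert (Habove : forall y, a < y <= x1 -> L < f y).
  { intros y Hy; destruct (Rle_or_lt (f y) L) as [Hle |]; [| assumption].
    assert (HSy : S y) by (unfold S; split; [lra | exact Hle]).
    pose proof (Hub y HSy); lra. }
  assert (Hfa : f a <= L).
  { destruct (Rle_or_lt (f a) L) as [| Hlt]; [assumption | exfalso].
    destruct (proj1 (continuity_pt_locally f a) (Hc a) (mkposreal (f a - L) ltac:(lra)))
      as [d Hd].
    assert (a <= a - d / 2); [| pose proof (cond_pos d); lra].
    apply Hlub; intros y [Hy Hfy]; destruct (Rle_or_lt y (a - d / 2)) as [| Hy']; [assumption |].
    assert (Hball : ball a d y).
    { pose proof (Hub y (conj Hy Hfy)); cbn; unfold AbsRing_ball, abs, minus, plus, opp; cbn.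
      rewrite Rabs_left1 by lra; lra. }
    specialize (Hd y Hball); cbn in Hd; apply Rabs_lt_between in Hd; lra. }
  assert (Hax : a < x1) by (destruct (Rle_lt_or_eq_dec a x1 (proj2 Ha)) as [| ->]; lra).
  exists a; split; [lra | split; [exact Hfa |]].
  apply Rle_trans with (RInt f a x1).
  - apply RInt_ge_const; [lra | apply ex_RInt_continuity, Hc |].
    intros y Hy; left; apply Habove; lra.
  - eapply Rle_trans; [apply (RInt_le_period f P); auto; lra | exact HB].
Qed.

(** * Elementary inequalities *)

(* Completing the square in [k_th_th + k]. *)
Lemma energy_rate_integrand_le sigma1 sigma2 kk w : 0 < sigma1 ->
  -2 * (sigma1 * kk ^ 2 * w + sigma1 * kk ^ 3 + sigma2 * kk ^ 2) * (w + kk)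
  <= sigma2 ^ 2 * kk ^ 2 / (2 * sigma1).
Proof.
  intros Hs.
  replace (-2 * (sigma1 * kk ^ 2 * w + sigma1 * kk ^ 3 + sigma2 * kk ^ 2) * (w + kk))
    with (sigma2 ^ 2 * kk ^ 2 / (2 * sigma1)
          - (kk * (sigma2 + 2 * sigma1 * (w + kk))) ^ 2 / (2 * sigma1)) by (field; lra).
  assert (0 <= (kk * (sigma2 + 2 * sigma1 * (w + kk))) ^ 2 / (2 * sigma1))
    by (apply Rdiv_le_0_compat; [apply pow2_ge_0 | lra]).
  lra.
Qed.

Lemma le_of_sqr_gap A E K Ml : 0 < A -> 0 <= K ->
  (Ml < K -> (K - Ml) ^ 2 <= (E + (A * K) ^ 2) / (4 * A ^ 2)) -> K <= 2 * Ml + / A * sqrt E.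
Proof.
  intros HA HK Hgap.
  set (q := sqrt E).
  assert (Hq : 0 <= q) by apply sqrt_pos.
  assert (HqA : 0 <= / A * q) by (apply Rmult_le_pos; [left; apply Rinv_0_lt_compat |]; lra).
  destruct (Rle_or_lt K Ml) as [| HMl]; [lra |].
  assert (HE : E <= q ^ 2).
  { destruct (Rle_or_lt 0 E); unfold q.
    - rewrite <- Rsqr_pow2, Rsqr_sqrt; lra.
    - rewrite sqrt_neg_0 by lra; lra. }
  set (u := / A * q / 2 + K / 2).
  assert (Hu : (K - Ml) ^ 2 <= u ^ 2).
  { eapply Rle_trans; [apply Hgap, HMl |].
    replace (u ^ 2) with ((q + A * K) ^ 2 / (4 * A ^ 2)) by (unfold u; field; lra).
    unfold Rdiv; apply Rmult_le_compat_r.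
    { left; apply Rinv_0_lt_compat, Rmult_lt_0_compat; [lra | apply pow_lt, HA]. }
    assert (0 <= q * (A * K)) by (apply Rmult_le_pos; nra); nra. }
  assert (K - Ml <= u) by (apply Rsqr_incr_0_var; [rewrite !Rsqr_pow2; exact Hu | unfold u; lra]).
  unfold u in *; lra.
Qed.

Lemma sqr_sum_sqrt_ge sigma1 sigma2 T tau : 0 < sigma1 -> 0 <= sigma2 -> 0 <= tau <= T ->
  2 * PI + PI * sigma2 ^ 2 * tau / sigma1
  <= (sqrt (2 * PI) + sigma2 * sqrt (PI * T / sigma1)) ^ 2.
Proof.
  intros Hs1 Hs2 Htau; pose proof PI_RGT_0.
  set (x := sqrt (2 * PI)); set (y := sqrt (PI * T / sigma1)).
  assert (Hx : x ^ 2 = 2 * PI) by (unfold x; rewrite <- Rsqr_pow2, Rsqr_sqrt; lra).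
  assert (Hy : y ^ 2 = PI * T / sigma1).
  { unfold y; rewrite <- Rsqr_pow2, Rsqr_sqrt; [reflexivity |].
    apply Rdiv_le_0_compat; nra. }
  assert (Hxy : 0 <= 2 * (x * y)) by (unfold x, y; pose proof (sqrt_pos (2 * PI));
    pose proof (sqrt_pos (PI * T / sigma1)); nra).
  assert (PI * sigma2 ^ 2 * tau / sigma1 <= sigma2 ^ 2 * (PI * T / sigma1)).
  { replace (sigma2 ^ 2 * (PI * T / sigma1)) with (PI * sigma2 ^ 2 / sigma1 * T) by (field; lra).
    replace (PI * sigma2 ^ 2 * tau / sigma1) with (PI * sigma2 ^ 2 / sigma1 * tau) by (field; lra).
    apply Rmult_le_compat_l; [| lra].
    apply Rdiv_le_0_compat; [pose proof (pow2_ge_0 sigma2); nra | lra]. }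
  replace ((x + sigma2 * y) ^ 2) with (x ^ 2 + sigma2 * (2 * (x * y)) + sigma2 ^ 2 * y ^ 2) by ring.
  rewrite Hx, Hy; nra.
Qed.

(** * The flow on [S^1 x [0, tau]] *)

Section Flow.

Variables (sigma1 sigma2 beta tau k0 C1 M0 : R) (k : R -> R -> R).
Hypothesis Hsigma1 : 0 < sigma1.
Hypothesis Hsigma2 : 0 <= sigma2.
Hypothesis Hbeta : 0 < beta.
Hypothesis Hper : forall th t, 0 <= t <= tau -> k (th + 2 * PI) t = k th t.
Hypothesis Hdiff : forall th t, 0 <= t <= tau ->
  ex_derive (fun x => k x t) th /\ ex_derive (fun x => d_th k x t) th.
Hypothesis Hdiff_t : forall th t, 0 < t <= tau -> ex_derive (fun s => k th s) t.
Hypothesis Hk : holder_on beta M0 (fun t => 0 <= t <= tau) k.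
Hypothesis Hk2 : holder_on beta M0 (fun t => 0 <= t <= tau) (d_th (d_th k)).
Hypothesis Hkt : holder_on beta M0 (fun t => 0 < t <= tau) (d_t k).
Hypothesis Hpde : forall th t, 0 < t <= tau ->
  d_t k th t = sigma1 * (k th t) ^ 2 * d_th (d_th k) th t
               + sigma1 * (k th t) ^ 3 + sigma2 * (k th t) ^ 2.
Hypothesis Hk0 : 0 < k0.
Hypothesis Hinit : forall th, k0 < k th 0.
Hypothesis HC1 : forall t, 0 <= t <= tau -> RInt (fun th => ln (k th t)) 0 (2 * PI) <= C1.

Lemma k_is_derive_space t x : 0 <= t <= tau -> is_derive (fun y => k y t) x (d_th k x t).
Proof. intros Ht; apply Derive_correct, (Hdiff x t Ht). Qed.

Lemma dk_is_derive_space t x : 0 <= t <= tau ->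
  is_derive (fun y => d_th k y t) x (d_th (d_th k) x t).
Proof. intros Ht; apply Derive_correct, (Hdiff x t Ht). Qed.

Lemma k_is_derive_time t x : 0 < t <= tau -> is_derive (fun s => k x s) t (d_t k x t).
Proof. intros Ht; apply Derive_correct, Hdiff_t, Ht. Qed.

Lemma k_continuity_space t x : 0 <= t <= tau -> continuity_pt (fun y => k y t) x.
Proof. intros Ht; eapply is_derive_continuity_pt, k_is_derive_space, Ht. Qed.

Lemma dk_continuity_space t x : 0 <= t <= tau -> continuity_pt (fun y => d_th k y t) x.
Proof. intros Ht; eapply is_derive_continuity_pt, dk_is_derive_space, Ht. Qed.

Lemma d2k_continuity_space t x : 0 <= t <= tau ->
  continuity_pt (fun y => d_th (d_th k) y t) x.
Proof. intros Ht; exact (holder_on_continuity_space _ _ _ _ x t Hbeta Hk2 Ht). Qed.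

Lemma dtk_continuity_space t x : 0 < t <= tau -> continuity_pt (fun y => d_t k y t) x.
Proof. intros Ht; exact (holder_on_continuity_space _ _ _ _ x t Hbeta Hkt Ht). Qed.

#[local] Hint Resolve k_continuity_space dk_continuity_space d2k_continuity_space
  dtk_continuity_space : continuity.

Lemma dk_periodic t x : 0 <= t <= tau -> d_th k (x + 2 * PI) t = d_th k x t.
Proof. intros Ht; apply Derive_periodic; intros y; apply Hper, Ht. Qed.

Lemma k_time_uniform eps : 0 < eps -> exists delta, 0 < delta /\
  forall x r s, 0 <= r <= tau -> 0 <= s <= tau -> Rabs (r - s) < delta ->
  Rabs (k x r - k x s) < eps.
Proof.
  intros He; destruct (holder_modulus_small M0 beta eps Hbeta He) as [delta [Hd Hsmall]].
  exists delta; split; [exact Hd |]; intros x r s Hr Hs Hrs.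
  eapply Rle_lt_trans; [exact (holder_on_time _ _ _ _ x r s Hk Hr Hs) | apply Hsmall, Hrs].
Qed.

Lemma k_ge_k0_limit s : 0 < s <= tau -> (forall r, 0 <= r < s -> forall x, k0 < k x r) ->
  forall x, k0 <= k x s.
Proof.
  intros Hs Hbelow x; destruct (Rle_or_lt k0 (k x s)) as [| Hlt]; [assumption | exfalso].
  destruct (k_time_uniform (k0 - k x s)) as [delta [Hd Hclose]]; [lra |].
  assert (Hm : 0 < Rmin delta s) by (apply Rmin_pos; lra).
  pose proof (Rmin_l delta s); pose proof (Rmin_r delta s).
  set (r := s - Rmin delta s / 2).
  specialize (Hclose x r s ltac:(unfold r; lra) ltac:(lra)
    ltac:(unfold r; rewrite Rabs_left; lra)).
  specialize (Hbelow r ltac:(unfold r; lra) x); apply Rabs_lt_between in Hclose; lra.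
Qed.

(* At a first touching point [k_t <= 0] and [k_thth >= 0], whereas the equation
   gives [k_t >= sigma1 k0^3 > 0] there. *)
Lemma k_not_touching_k0 s y : 0 < s <= tau -> (forall x, k0 <= k x s) ->
  (forall r, 0 <= r < s -> k0 < k y r) -> k0 < k y s.
Proof.
  intros Hs Hge Hbelow.
  destruct (Rle_lt_or_eq_dec k0 (k y s) (Hge y)) as [| Heq]; [assumption | exfalso].
  assert (Hxx : 0 <= d_th (d_th k) y s).
  { apply (second_derive_ge0_at_min (fun x => k x s) (fun x => d_th k x s) y).
    - intros; apply k_is_derive_space; lra.
    - apply dk_is_derive_space; lra.
    - intros z; rewrite <- Heq; apply Hge. }
  assert (Ht : d_t k y s <= 0).
  { apply (is_derive_le0_at_left_min (fun r => k y r) s _ s);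
      [apply k_is_derive_time, Hs | lra |].
    intros r Hr; rewrite <- Heq; left; apply Hbelow; lra. }
  rewrite Hpde, <- Heq in Ht by exact Hs.
  assert (0 <= sigma1 * k0 ^ 2 * d_th (d_th k) y s).
  { apply Rmult_le_pos; [apply Rmult_le_pos; [lra | apply pow2_ge_0] | exact Hxx]. }
  assert (0 < sigma1 * k0 ^ 3) by (apply Rmult_lt_0_compat; [lra | apply pow_lt, Hk0]).
  assert (0 <= sigma2 * k0 ^ 2) by (apply Rmult_le_pos; [lra | apply pow2_ge_0]).
  lra.
Qed.

Lemma k_gt_k0_persists s : 0 <= s < tau -> (forall x, k0 < k x s) ->
  exists delta, 0 < delta /\ forall r, s < r < s + delta -> forall x, k0 < k x r.
Proof.
  intros Hs Habove.
  destruct (periodic_argmin (fun x => k x s) (2 * PI)) as [xm Hxm];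
    [exact two_PI_pos | intros; apply Hper; lra | intros; apply k_continuity_space; lra |].
  destruct (k_time_uniform (k xm s - k0)) as [delta [Hd Hclose]]; [specialize (Habove xm); lra |].
  exists (Rmin delta (tau - s)); split; [apply Rmin_pos; lra |].
  intros r Hr x; pose proof (Rmin_l delta (tau - s)); pose proof (Rmin_r delta (tau - s)).
  specialize (Hclose x r s ltac:(lra) ltac:(lra) ltac:(rewrite Rabs_pos_eq; lra)).
  apply Rabs_lt_between in Hclose; specialize (Hxm x); cbn in Hxm; lra.
Qed.

Lemma k_gt_k0 t x : 0 <= t <= tau -> k0 < k x t.
Proof.
  intros Ht; revert x.
  apply (real_induction (fun s => forall y, k0 < k y s) 0 tau); [lra | | | exact Ht].
  - intros s Hs Hbelow y.
    destruct (Rle_lt_or_eq_dec 0 s (proj1 Hs)) as [Hpos | <-]; [| apply Hinit].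
    apply k_not_touching_k0; [lra | apply k_ge_k0_limit; [lra | exact Hbelow] |].
    intros r Hr; apply Hbelow, Hr.
  - intros s Hs Hupto; apply k_gt_k0_persists; [exact Hs | apply Hupto; lra].
Qed.

Definition energy t := RInt (fun x => d_th k x t ^ 2 - k x t ^ 2) 0 (2 * PI).

Definition energy_rate t :=
  RInt (fun x => -2 * d_t k x t * (d_th (d_th k) x t + k x t)) 0 (2 * PI).

(* Integration by parts in [x] turns [k_th(s)^2 - k_th(t)^2] into
   [-(k(s) - k(t)) (k_thth(s) + k_thth(t))]. *)
Lemma energy_sub s t : 0 <= s <= tau -> 0 <= t <= tau ->
  energy s - energy t = - RInt (fun x => (k x s - k x t) *
     (d_th (d_th k) x s + d_th (d_th k) x t + k x s + k x t)) 0 (2 * PI).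
Proof.
  intros Hs Ht; unfold energy.
  rewrite <- RInt_minus_R by (apply ex_RInt_continuity; auto 20 with continuity).
  rewrite (RInt_ext_R _ (fun x => (d_th k x s - d_th k x t) * (d_th k x s + d_th k x t)
                                  - (k x s - k x t) * (k x s + k x t))) by (intros; ring).
  rewrite RInt_minus_R by (apply ex_RInt_continuity; auto 20 with continuity).
  rewrite (RInt_parts_periodic (fun x => k x s - k x t) (fun x => d_th k x s - d_th k x t)
             (fun x => k x s + k x t) (fun x => d_th k x s + d_th k x t)
             (fun x => d_th (d_th k) x s + d_th (d_th k) x t)).
  - rewrite (RInt_ext_R (fun x => (k x s - k x t) *
                 (d_th (d_th k) x s + d_th (d_th k) x t + k x s + k x t))
               (fun x => (k x s - k x t) * (d_th (d_th k) x s + d_th (d_th k) x t)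
                         + (k x s - k x t) * (k x s + k x t))) by (intros; ring).
    rewrite RInt_plus_R by (apply ex_RInt_continuity; auto 20 with continuity); ring.
  - intros x; exact (is_derive_minus _ _ _ _ _
                       (k_is_derive_space s x Hs) (k_is_derive_space t x Ht)).
  - intros x; exact (is_derive_plus _ _ _ _ _
                       (k_is_derive_space s x Hs) (k_is_derive_space t x Ht)).
  - intros x; exact (is_derive_plus _ _ _ _ _
                       (dk_is_derive_space s x Hs) (dk_is_derive_space t x Ht)).
  - auto 20 with continuity.
  - auto 20 with continuity.
  - replace (2 * PI) with (0 + 2 * PI) by ring; rewrite !Hper by assumption; reflexivity.
  - replace (2 * PI) with (0 + 2 * PI) by ring; rewrite !dk_periodic by assumption; reflexivity.
Qed.

Lemma d2k_k_sum_bound s t x : 0 <= s <= tau -> 0 <= t <= tau ->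
  Rabs (d_th (d_th k) x s + d_th (d_th k) x t + k x s + k x t) <= 4 * M0.
Proof.
  intros Hs Ht.
  pose proof (holder_on_bound _ _ _ _ x s Hk2 Hs); pose proof (holder_on_bound _ _ _ _ x t Hk2 Ht).
  pose proof (holder_on_bound _ _ _ _ x s Hk Hs); pose proof (holder_on_bound _ _ _ _ x t Hk Ht).
  repeat match goal with H : Rabs _ <= _ |- _ => apply Rabs_le_between in H end.
  apply Rabs_le; lra.
Qed.

Lemma energy_holder : holder_interval (8 * PI * M0 ^ 2) beta 0 tau energy.
Proof.
  intros a b Ha Hb; rewrite energy_sub, Rabs_Ropp by assumption.
  eapply Rle_trans;
    [apply abs_RInt_le_const with (M := M0 * hpow (Rabs (a - b)) beta * (4 * M0)) |].
  - pose proof two_PI_pos; lra.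
  - apply ex_RInt_continuity; auto 20 with continuity.
  - intros x _; rewrite Rabs_mult; apply Rmult_le_compat; try apply Rabs_pos.
    + exact (holder_on_time _ _ _ _ x a b Hk Ha Hb).
    + apply d2k_k_sum_bound; assumption.
  - right; ring.
Qed.

Lemma k_time_mean_value t h x : 0 < t <= tau -> 0 < t + h <= tau ->
  exists xi, 0 < xi <= tau /\ Rabs (xi - t) <= Rabs h /\ k x (t + h) - k x t = d_t k x xi * h.
Proof.
  intros Ht Hth.
  assert (Hbetween : forall s, Rmin t (t + h) <= s <= Rmax t (t + h) ->
                       0 < s <= tau /\ Rabs (s - t) <= Rabs h).
  { intros s Hs; unfold Rmin, Rmax in Hs; destruct Rle_dec;
      split; try lra; unfold Rabs; repeat destruct Rcase_abs; lra. }
  destruct (MVT_gen (fun s => k x s) t (t + h) (fun s => d_t k x s)) as [xi [Hxi Hmvt]].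
  - intros s Hs; apply k_is_derive_time, Hbetween; lra.
  - intros s Hs; eapply is_derive_continuity_pt, k_is_derive_time, Hbetween, Hs.
  - exists xi; split; [| split]; [apply Hbetween, Hxi | apply Hbetween, Hxi |].
    replace (t + h - t) with h in Hmvt by ring; exact Hmvt.
Qed.

(* After the mean value theorem the quotient is [-k_t(xi) W] with [W = w(t + h) + w(t)],
   [w = k_thth + k]; write [-k_t(xi) W + 2 k_t(t) w(t)] as
   [-(k_t(xi) - k_t(t)) W - k_t(t) (W - 2 w(t))] and use the Hoelder bounds. *)
Lemma energy_integrand_quotient_estimate t h x : 0 < t <= tau -> 0 < t + h <= tau -> h <> 0 ->
  Rabs (- / h * ((k x (t + h) - k x t) *
          (d_th (d_th k) x (t + h) + d_th (d_th k) x t + k x (t + h) + k x t))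
        - -2 * d_t k x t * (d_th (d_th k) x t + k x t))
  <= 6 * M0 ^ 2 * hpow (Rabs h) beta.
Proof.
  intros Ht Hth Hh.
  destruct (k_time_mean_value t h x Ht Hth) as [xi [Hxi_in [Hxi_t Hmvt]]]; rewrite Hmvt.
  pose proof (holder_on_nonneg _ _ _ _ x t Hkt Ht) as HM0.
  set (hp := hpow (Rabs h) beta).
  assert (Hdt : Rabs (d_t k x xi - d_t k x t) <= M0 * hp).
  { eapply Rle_trans; [exact (holder_on_time _ _ _ _ x xi t Hkt Hxi_in Ht) |].
    apply Rmult_le_compat_l; [exact HM0 |].
    apply hpow_le; [exact Hbeta | split; [apply Rabs_pos | exact Hxi_t]]. }
  assert (Hincr : forall f, holder_on beta M0 (fun t => 0 <= t <= tau) f ->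
            Rabs (f x (t + h) - f x t) <= M0 * hp).
  { intros f Hf; unfold hp; replace h with (t + h - t) at 2 by ring.
    apply (holder_on_time _ _ _ _ x (t + h) t Hf); lra. }
  pose proof (Hincr _ Hk2) as Hd2; pose proof (Hincr _ Hk) as Hd0.
  pose proof (d2k_k_sum_bound (t + h) t x ltac:(lra) ltac:(lra)) as HW.
  pose proof (holder_on_bound _ _ _ _ x t Hkt Ht) as Hkt_t.
  replace (- / h * (d_t k x xi * h * (d_th (d_th k) x (t + h) + d_th (d_th k) x t
                                       + k x (t + h) + k x t))
           - -2 * d_t k x t * (d_th (d_th k) x t + k x t))
    with (- ((d_t k x xi - d_t k x t) * (d_th (d_th k) x (t + h) + d_th (d_th k) x t
                                         + k x (t + h) + k x t))
          - d_t k x t * ((d_th (d_th k) x (t + h) - d_th (d_th k) x t)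
                         + (k x (t + h) - k x t))) by (field; exact Hh).
  unfold Rminus at 1; eapply Rle_trans; [apply Rabs_triang |].
  rewrite !Rabs_Ropp, !Rabs_mult.
  pose proof (Rabs_triang (d_th (d_th k) x (t + h) - d_th (d_th k) x t) (k x (t + h) - k x t)).
  assert (Rabs (d_t k x xi - d_t k x t) * Rabs (d_th (d_th k) x (t + h) + d_th (d_th k) x t
            + k x (t + h) + k x t) <= M0 * hp * (4 * M0))
    by (apply Rmult_le_compat; try apply Rabs_pos; assumption).
  assert (Rabs (d_t k x t) * Rabs (d_th (d_th k) x (t + h) - d_th (d_th k) x t
            + (k x (t + h) - k x t)) <= M0 * (2 * (M0 * hp)))
    by (apply Rmult_le_compat; try apply Rabs_pos; lra).
  nra.
Qed.

Lemma energy_quotient_bound t h : 0 < t <= tau -> 0 < t + h <= tau -> h <> 0 ->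
  Rabs ((energy (t + h) - energy t) / h - energy_rate t)
  <= 2 * PI * (6 * M0 ^ 2 * hpow (Rabs h) beta).
Proof.
  intros Ht Hth Hh; rewrite energy_sub by lra; unfold energy_rate.
  assert (Hlin : forall F G : R -> R, ex_RInt F 0 (2 * PI) -> ex_RInt G 0 (2 * PI) ->
            (- RInt F 0 (2 * PI)) / h - RInt G 0 (2 * PI)
            = RInt (fun x => - / h * F x - G x) 0 (2 * PI)).
  { intros F G HF HG.
    rewrite RInt_minus_R; [| exact (ex_RInt_scal F 0 (2 * PI) (- / h) HF) | exact HG].
    rewrite RInt_scal_R by exact HF; field; exact Hh. }
  rewrite Hlin by (apply ex_RInt_continuity; auto 20 with continuity).
  eapply Rle_trans;
    [apply abs_RInt_le_const with (M := 6 * M0 ^ 2 * hpow (Rabs h) beta) |].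
  - pose proof two_PI_pos; lra.
  - apply ex_RInt_continuity; auto 20 with continuity.
  - intros x _; apply energy_integrand_quotient_estimate; assumption.
  - right; ring.
Qed.

Lemma energy_is_derive t : 0 < t < tau -> is_derive energy t (energy_rate t).
Proof.
  intros Ht; apply is_derive_Reals; intros eps Heps.
  destruct (holder_modulus_small (2 * PI * (6 * M0 ^ 2)) beta eps Hbeta Heps)
    as [d [Hd Hsmall]].
  assert (Hdp : 0 < Rmin d (Rmin t (tau - t))) by (repeat apply Rmin_pos; lra).
  exists (mkposreal _ Hdp); intros h Hh0 Hh; cbn in Hh.
  pose proof (Rmin_l d (Rmin t (tau - t))); pose proof (Rmin_r d (Rmin t (tau - t))).
  pose proof (Rmin_l t (tau - t)); pose proof (Rmin_r t (tau - t)).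
  pose proof (proj1 (Rabs_lt_between h _) (Rlt_le_trans _ _ _ Hh (Rmin_r _ _))).
  eapply Rle_lt_trans; [apply energy_quotient_bound; [lra | lra | exact Hh0] |].
  rewrite <- Rmult_assoc; apply Hsmall; lra.
Qed.

Lemma energy_rate_le s K : 0 < s <= tau -> (forall x, Rabs (k x s) <= K) ->
  energy_rate s <= PI * sigma2 ^ 2 * K ^ 2 / sigma1.
Proof.
  intros Hs HK; unfold energy_rate.
  eapply Rle_trans; [apply RInt_le with (g := fun _ => sigma2 ^ 2 * K ^ 2 / (2 * sigma1)) |].
  - pose proof two_PI_pos; lra.
  - apply ex_RInt_continuity; auto 20 with continuity.
  - apply ex_RInt_const.
  - intros x _; rewrite Hpde by exact Hs.
    eapply Rle_trans; [apply energy_rate_integrand_le, Hsigma1 |].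
    assert (k x s ^ 2 <= K ^ 2).
    { rewrite <- (pow2_abs (k x s)); apply pow_incr; split; [apply Rabs_pos | apply HK]. }
    unfold Rdiv; apply Rmult_le_compat_r; [left; apply Rinv_0_lt_compat; lra |].
    apply Rmult_le_compat_l; [apply pow2_ge_0 | assumption].
  - rewrite RInt_const_R; right; field; lra.
Qed.

Lemma energy_le t K : 0 <= t <= tau -> (forall x s, 0 <= s <= t -> Rabs (k x s) <= K) ->
  energy t <= energy 0 + PI * sigma2 ^ 2 * K ^ 2 / sigma1 * t.
Proof.
  intros Ht HK; destruct (Rle_lt_or_eq_dec 0 t (proj1 Ht)) as [Hpos | <-]; [| lra].
  pose proof (holder_interval_derive_le (8 * PI * M0 ^ 2) beta 0 t energy energy_rate
                (PI * sigma2 ^ 2 * K ^ 2 / sigma1) Hbeta Hpos) as Hmvt.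
  rewrite Rminus_0_r in Hmvt; apply Hmvt.
  - intros r s Hr Hs; apply energy_holder; lra.
  - intros s Hs; apply energy_is_derive; lra.
  - intros s Hs; apply energy_rate_le; [lra | intros x; apply HK; lra].
Qed.

Lemma k_space_argmax t : exists x, 0 <= t <= tau -> forall y, k y t <= k x t.
Proof.
  destruct (classic (0 <= t <= tau)) as [Ht | Ht]; [| exists 0; intros; contradiction].
  destruct (periodic_argmax (fun x => k x t) (2 * PI)) as [xm Hxm];
    [exact two_PI_pos | intros; apply Hper, Ht | intros; apply k_continuity_space, Ht |].
  exists xm; intros _; exact Hxm.
Qed.

(* The spatial maximum is Hoelder in time, hence attains its maximum on [[0, t]]. *)
Lemma k_max_attained t : 0 <= t <= tau ->
  exists s x1, 0 <= s <= t /\ forall y r, 0 <= r <= t -> k y r <= k x1 s.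
Proof.
  intros Ht.
  destruct (functional_choice (fun t x => 0 <= t <= tau -> forall y, k y t <= k x t)
              k_space_argmax) as [g Hg].
  assert (Hholder : holder_interval M0 beta 0 t (fun r => k (g r) r)).
  { intros r s Hr Hs.
    pose proof (holder_on_time _ _ _ _ (g r) r s Hk ltac:(lra) ltac:(lra)).
    pose proof (holder_on_time _ _ _ _ (g s) r s Hk ltac:(lra) ltac:(lra)).
    pose proof (Hg r ltac:(lra) (g s)); pose proof (Hg s ltac:(lra) (g r)).
    repeat match goal with H : Rabs _ <= _ |- _ => apply Rabs_le_between in H end.
    apply Rabs_le; lra. }
  destruct (holder_interval_attains_max _ _ _ _ _ Hbeta (proj1 Ht) Hholder) as [s [Hs Hmax]].
  exists s, (g s); split; [exact Hs |]; intros y r Hr.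
  eapply Rle_trans; [apply Hg; lra | apply Hmax, Hr].
Qed.

(* [log k], shifted by [|log k0|] so that it is positive. *)
Definition shifted_log t x := ln (k x t) + Rabs (ln k0).

Lemma shifted_log_pos t x : 0 <= t <= tau -> 0 < shifted_log t x.
Proof.
  intros Ht; unfold shifted_log.
  assert (ln k0 < ln (k x t)) by (apply ln_increasing; [exact Hk0 | apply k_gt_k0, Ht]).
  pose proof (Rle_abs (- ln k0)); rewrite Rabs_Ropp in *; lra.
Qed.

Lemma shifted_log_continuity t x : 0 <= t <= tau -> continuity_pt (shifted_log t) x.
Proof.
  intros Ht; apply continuity_pt_plus_fun; [| apply continuity_pt_const_fun].
  eapply is_derive_continuity_pt, (is_derive_comp ln (fun y => k y t) x);
    [apply is_derive_ln | apply k_is_derive_space, Ht].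
  pose proof (k_gt_k0 t x Ht); lra.
Qed.

Lemma shifted_log_periodic t x : 0 <= t <= tau -> shifted_log t (x + 2 * PI) = shifted_log t x.
Proof. intros Ht; unfold shifted_log; rewrite Hper by exact Ht; reflexivity. Qed.

Lemma RInt_shifted_log_le t : 0 <= t <= tau ->
  RInt (shifted_log t) 0 (2 * PI) <= C1 + 2 * PI * Rabs (ln k0).
Proof.
  intros Ht; unfold shifted_log.
  rewrite RInt_plus_R, RInt_const_R; [pose proof (HC1 t Ht); lra | | apply ex_RInt_const].
  apply ex_RInt_continuity; intros x.
  apply (continuity_pt_ext (fun y => shifted_log t y - Rabs (ln k0)));
    [intros; unfold shifted_log; ring |].
  apply continuity_pt_minus_fun; [apply shifted_log_continuity, Ht | apply continuity_pt_const_fun].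
Qed.

Lemma log_bound_pos t : 0 <= t <= tau -> 0 < C1 + 2 * PI * Rabs (ln k0).
Proof.
  intros Ht; eapply Rlt_le_trans; [| apply (RInt_shifted_log_le t Ht)].
  apply Rle_lt_trans with (RInt (fun _ => 0) 0 (2 * PI)); [rewrite RInt_const_R; lra |].
  apply RInt_lt; [exact two_PI_pos | | | intros; apply shifted_log_pos, Ht];
    intros x _; apply continuity_pt_filterlim;
    [apply shifted_log_continuity, Ht | apply continuity_pt_const_fun].
Qed.

(* Where [k > M = exp(4 B A^2)], [shifted_log] exceeds [4 B A^2], so the bound [B] on
   its integral forces [k <= M] within [1 / (4 A^2)] before any point where [k > M]. *)
Lemma k_sublevel_near s x1 A : 0 <= s <= tau -> 0 < A -> 2 * PI <= A ^ 2 ->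
  exp (4 * (C1 + 2 * PI * Rabs (ln k0)) * A ^ 2) < k x1 s ->
  exists a, x1 - 2 * PI <= a < x1 /\
    k a s <= exp (4 * (C1 + 2 * PI * Rabs (ln k0)) * A ^ 2) /\ x1 - a <= / (4 * A ^ 2).
Proof.
  intros Hs HA HA2.
  set (B := C1 + 2 * PI * Rabs (ln k0)); set (M := exp (4 * B * A ^ 2)); intros HM.
  assert (HB : 0 < B) by exact (log_bound_pos s Hs).
  assert (Hlevel : forall y, 4 * B * A ^ 2 + Rabs (ln k0) < shifted_log s y <-> M < k y s).
  { intros y; pose proof (k_gt_k0 s y Hs); unfold shifted_log, M; split; intros Hy.
    - apply ln_lt_inv; [apply exp_pos | lra | rewrite ln_exp; lra].
    - apply ln_increasing in Hy; [rewrite ln_exp in Hy; lra | apply exp_pos]. }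
  assert (H8PI : 1 < 2 * PI * (4 * A ^ 2)) by (pose proof PI2_3_2; nra).
  destruct (periodic_superlevel_arc (shifted_log s) (2 * PI) B (4 * B * A ^ 2 + Rabs (ln k0)) x1)
    as [a [Ha [Hfa HaL]]].
  - exact two_PI_pos.
  - intros; apply shifted_log_continuity, Hs.
  - intros; apply shifted_log_periodic, Hs.
  - intros; left; apply shifted_log_pos, Hs.
  - apply RInt_shifted_log_le, Hs.
  - replace (2 * PI * (4 * B * A ^ 2 + Rabs (ln k0)))
      with (2 * PI * (4 * A ^ 2) * B + 2 * PI * Rabs (ln k0)) by ring.
    assert (0 <= 2 * PI * Rabs (ln k0))
      by (apply Rmult_le_pos; [pose proof two_PI_pos; lra | apply Rabs_pos]).
    nra.
  - apply Hlevel, HM.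
  - exists a; split; [exact Ha | split].
    + destruct (Rle_or_lt (k a s) M) as [| Hlt]; [assumption | apply Hlevel in Hlt; lra].
    + assert (H4A : 0 < 4 * A ^ 2) by (pose proof (pow_lt A 2 HA); lra).
      apply Rmult_le_reg_r with (4 * A ^ 2 * B); [apply Rmult_lt_0_compat; lra |].
      replace (/ (4 * A ^ 2) * (4 * A ^ 2 * B)) with B by (field; lra).
      pose proof (Rabs_pos (ln k0)); nra.
Qed.

Lemma max_gap_le_gradient s x1 A : 0 <= s <= tau -> 0 < A -> 2 * PI <= A ^ 2 ->
  exp (4 * (C1 + 2 * PI * Rabs (ln k0)) * A ^ 2) < k x1 s ->
  (k x1 s - exp (4 * (C1 + 2 * PI * Rabs (ln k0)) * A ^ 2)) ^ 2
  <= RInt (fun x => d_th k x s ^ 2) 0 (2 * PI) / (4 * A ^ 2).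
Proof.
  intros Hs HA HA2 HM.
  destruct (k_sublevel_near s x1 A Hs HA HA2 HM) as [a [Ha [Hka Hlen]]].
  set (M := exp (4 * (C1 + 2 * PI * Rabs (ln k0)) * A ^ 2)) in *.
  set (I := RInt (fun x => d_th k x s ^ 2) 0 (2 * PI)).
  set (Ia := RInt (fun x => d_th k x s ^ 2) a x1).
  assert (Hgrad : (k x1 s - k a s) ^ 2 <= (x1 - a) * Ia).
  { apply (sqr_increment_le (fun x => k x s) (fun x => d_th k x s)); [lra | |];
      intros; [apply k_is_derive_space | apply dk_continuity_space]; exact Hs. }
  assert (HIa : 0 <= Ia <= I).
  { split.
    - apply RInt_ge_0; [lra | apply ex_RInt_continuity; auto 20 with continuity |].
      intros; apply pow2_ge_0.
    - apply RInt_le_period; [auto 20 with continuity | | intros; apply pow2_ge_0 | lra].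
      intros x; cbv beta; rewrite dk_periodic by exact Hs; reflexivity. }
  assert ((k x1 s - M) ^ 2 <= (k x1 s - k a s) ^ 2) by (apply pow_incr; lra).
  assert ((x1 - a) * Ia <= / (4 * A ^ 2) * I) by (apply Rmult_le_compat; lra).
  unfold Rdiv; rewrite (Rmult_comm I); lra.
Qed.

Lemma gradient_sqr_le s K : 0 <= s <= tau ->
  (forall y r, 0 <= r <= s -> Rabs (k y r) <= K) ->
  RInt (fun x => d_th k x s ^ 2) 0 (2 * PI)
  <= energy 0 + (2 * PI + PI * sigma2 ^ 2 * tau / sigma1) * K ^ 2.
Proof.
  intros Hs HK.
  assert (Hmass : RInt (fun x => k x s ^ 2) 0 (2 * PI) <= 2 * PI * K ^ 2).
  { replace (2 * PI * K ^ 2) with ((2 * PI - 0) * K ^ 2) by ring; rewrite <- RInt_const_R.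
    apply RInt_le; [pose proof two_PI_pos; lra | apply ex_RInt_continuity; auto 20 with continuity
                   | apply ex_RInt_const |].
    intros x _; rewrite <- (pow2_abs (k x s)); apply pow_incr.
    split; [apply Rabs_pos | apply HK; lra]. }
  pose proof (energy_le s K Hs HK) as HE; unfold energy at 1 in HE.
  rewrite RInt_minus_R in HE by (apply ex_RInt_continuity; auto 20 with continuity).
  assert (PI * sigma2 ^ 2 * K ^ 2 / sigma1 * s <= PI * sigma2 ^ 2 * tau / sigma1 * K ^ 2).
  { replace (PI * sigma2 ^ 2 * tau / sigma1 * K ^ 2)
      with (PI * sigma2 ^ 2 * K ^ 2 / sigma1 * tau) by (field; lra).
    apply Rmult_le_compat_l; [| lra].
    apply Rdiv_le_0_compat; [| lra].
    pose proof PI_RGT_0; pose proof (pow2_ge_0 sigma2); pose proof (pow2_ge_0 K).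
    apply Rmult_le_pos; [apply Rmult_le_pos |]; lra. }
  lra.
Qed.

Lemma k_le_bound t x A : 0 <= t <= tau -> 0 < A ->
  2 * PI + PI * sigma2 ^ 2 * tau / sigma1 <= A ^ 2 ->
  k x t <= 2 * exp (4 * (C1 + 2 * PI * Rabs (ln k0)) * A ^ 2) + / A * sqrt (energy 0).
Proof.
  intros Ht HA HA2.
  destruct (k_max_attained t Ht) as [s [x1 [Hs Hmax]]].
  assert (Hs' : 0 <= s <= tau) by lra.
  assert (Habs : forall y r, 0 <= r <= s -> Rabs (k y r) <= k x1 s).
  { intros y r Hr; pose proof (k_gt_k0 r y ltac:(lra)).
    rewrite Rabs_pos_eq by lra; apply Hmax; lra. }
  assert (H2PI : 2 * PI <= A ^ 2).
  { assert (0 <= PI * sigma2 ^ 2 * tau / sigma1); [| lra].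
    pose proof PI_RGT_0; pose proof (pow2_ge_0 sigma2).
    apply Rdiv_le_0_compat; [apply Rmult_le_pos; [apply Rmult_le_pos |] |]; lra. }
  eapply Rle_trans; [apply Hmax; lra |].
  apply le_of_sqr_gap; [exact HA | pose proof (k_gt_k0 s x1 Hs'); lra |]; intros HM.
  eapply Rle_trans; [apply max_gap_le_gradient; assumption |].
  unfold Rdiv; apply Rmult_le_compat_r;
    [left; apply Rinv_0_lt_compat; pose proof (pow_lt A 2 HA); lra |].
  eapply Rle_trans; [exact (gradient_sqr_le s (k x1 s) Hs' Habs) |].
  rewrite Rpow_mult_distr; apply Rplus_le_compat_l.
  apply Rmult_le_compat_r; [apply pow2_ge_0 | exact HA2].
Qed.

End Flow.

Theorem proposition3p10
  (sigma1 sigma2 beta T k0 C1 : R) (k : R -> R -> R) (psi : R -> R) :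
  0 < sigma1 -> 0 < sigma2 -> 0 < beta < 1 -> 0 < T ->
  (* periodicity: k is a function on S^1 x [0,T) *)
  (forall th t, 0 <= t < T -> k (th + 2 * PI) t = k th t) ->
  (* regularity on S^1 x [0, T - eps] for every eps > 0 *)
  (forall eps, 0 < eps < T -> C2b1b beta (T - eps) k) ->
  (* the evolution equation *)
  (forall th t, 0 < t < T ->
     d_t k th t = sigma1 * (k th t) ^ 2 * d_th (d_th k) th t
                  + sigma1 * (k th t) ^ 3 + sigma2 * (k th t) ^ 2) ->
  (* initial data *)
  (forall th, k th 0 = psi th) ->
  C1b beta psi ->
  (forall th, 0 < psi th) ->
  RInt (fun th => cos th / psi th) 0 (2 * PI) = 0 ->
  RInt (fun th => sin th / psi th) 0 (2 * PI) = 0 ->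
  0 < k0 ->
  (forall th, k0 < k th 0) ->
  (* integral bound on log k *)
  (forall t, 0 <= t < T -> RInt (fun th => ln (k th t)) 0 (2 * PI) <= C1) ->
  (forall t, 0 <= t < T -> forall th,
     k th t <=
       2 * exp (4 * (C1 + 2 * PI * Rabs (ln k0))
                  * (sqrt (2 * PI) + sigma2 * sqrt (PI * T / sigma1)) ^ 2)
       + / (sqrt (2 * PI) + sigma2 * sqrt (PI * T / sigma1))
         * sqrt (RInt (fun th' => (d_th k th' 0) ^ 2 - (k th' 0) ^ 2) 0 (2 * PI)))
  /\
  (exists M, forall th t, 0 <= t < T -> Rabs (k th t) <= M).
Proof.
  intros Hs1 Hs2 Hb HT Hper Hreg Hpde _ _ _ _ _ Hk0 Hinit HC1.
  set (A := sqrt (2 * PI) + sigma2 * sqrt (PI * T / sigma1)).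
  assert (HA : 0 < A).
  { pose proof (sqrt_lt_R0 (2 * PI) two_PI_pos); pose proof (sqrt_pos (PI * T / sigma1)).
    unfold A; nra. }
  assert (Hlocal : forall t th, 0 <= t < T -> k0 < k th t /\
            k th t <= 2 * exp (4 * (C1 + 2 * PI * Rabs (ln k0)) * A ^ 2)
                      + / A * sqrt (energy k 0)).
  { intros t th Ht.
    destruct (Hreg ((T - t) / 2) ltac:(lra)) as [Hdiff [Hdiff_t [M0 [Hk [_ [Hk2 Hkt]]]]]].
    set (tau := T - (T - t) / 2) in *.
    assert (Htau : t < tau < T) by (unfold tau; lra).
    split.
    - apply (k_gt_k0 sigma1 sigma2 beta tau k0 M0 k); try assumption; try lra;
        intros; [apply Hper | apply Hpde]; lra.
    - apply (k_le_bound sigma1 sigma2 beta tau k0 C1 M0 k); try assumption; try lra;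
        [intros; apply Hper; lra | intros; apply Hpde; lra | intros; apply HC1; lra |].
      apply sqr_sum_sqrt_ge; lra. }
  split; [intros t Ht th; apply Hlocal, Ht |].
  eexists; intros th t Ht; destruct (Hlocal t th Ht).
  rewrite Rabs_pos_eq by lra; eassumption.
Qed.
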